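(* Let $\Omega$ be the closure of a bounded domain in $\mathbb{R}^d$, let $X$ be a Banach space of functions on $\Omega$ with $C(\Omega)\subset X$ and $\|g\|_X\le C_X\|g\|_{C(\Omega)}$ for all $g\in C(\Omega)$, let $K$ be a compact subset of $C(\Omega)$, let ${\bf x}=(x_1,\dots,x_m)\in\Omega^m$ and $w\in\mathbb{R}^m$. Then $$\lim_{\varepsilon\to0^+}R(K(w,\varepsilon))_X=R(K_w)_X .$$
   Context: $\lambda_{\bf x}(g):=(g(x_1),\dots,g(x_m))$ for $g\in C(\Omega)$; on $\mathbb{R}^m$, $\|v\|:=\big[\frac1m\sum_{j=1}^m|v_j|^2\big]^{1/2}$. $K_{w'}:=\{h\in K:\lambda_{\bf x}(h)=w'\}$, $K(w,\varepsilon):=\bigcup_{w'\in\mathbb{R}^m,\ \|w'-w\|\le\varepsilon}K_{w'}$. For $S\subset X$, $R(S)_X:=\inf\{r:\ S\subset B(z,r)_X\text{ for some }z\in X\}$ (Chebyshev radius in $X$). *)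

From HB Require Import structures.
From mathcomp Require Import all_boot all_order all_algebra.
From mathcomp Require Import all_classical all_reals all_analysis.
Set Implicit Arguments. Unset Strict Implicit. Unset Printing Implicit Defensive.
Import Order.TTheory GRing.Theory Num.Theory.
Import numFieldNormedType.Exports.
Local Open Scope classical_set_scope.
Local Open Scope ring_scope.

Definition closure_of_bounded_domain (R : realType) (d : nat)
    (Om : set 'rV[R]_d) : Prop :=
  exists D : set 'rV[R]_d,
    [/\ open D, connected D, D !=set0, bounded_set D & Om = closure D].

(* C(Omega): functions continuous on Omega, represented canonically as
   functions on R^d vanishing outside Omega. *)
Definition CO (R : realType) (d : nat) (Om : set 'rV[R]_d) : set ('rV[R]_d -> R) :=
  [set f | {within Om, continuous f} /\ (forall x, ~ Om x -> f x = 0)].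

Definition supnorm (R : realType) (d : nat) (Om : set 'rV[R]_d)
    (g : 'rV[R]_d -> R) : R :=
  sup [set `|g x| | x in Om].

Definition lam (R : realType) (d m : nat) (xs : 'I_m -> 'rV[R]_d)
    (g : 'rV[R]_d -> R) : 'I_m -> R := fun j => g (xs j).

Definition mnorm (R : realType) (m : nat) (v : 'I_m -> R) : R :=
  Num.sqrt (m%:R^-1 * \sum_(j < m) `|v j| ^+ 2).

Definition Kfib (R : realType) (d m : nat) (K : set ('rV[R]_d -> R))
    (xs : 'I_m -> 'rV[R]_d) (w' : 'I_m -> R) : set ('rV[R]_d -> R) :=
  [set h | K h /\ lam xs h = w'].

Definition Knbhd (R : realType) (d m : nat) (K : set ('rV[R]_d -> R))
    (xs : 'I_m -> 'rV[R]_d) (w : 'I_m -> R) (eps : R) : set ('rV[R]_d -> R) :=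
  \bigcup_(w' in [set w' : 'I_m -> R | mnorm (w' \- w) <= eps]) Kfib K xs w'.

Definition cheb_radius (R : realType) (X : normedModType R) (S : set X) : \bar R :=
  ereal_inf [set r%:E | r in [set r : R | 0 <= r /\
     exists z : X, S `<=` [set y : X | `|y - z| <= r]]].

From HB Require Import structures.
From mathcomp Require Import all_boot all_order all_algebra.
From mathcomp Require Import all_classical all_reals all_analysis.
From mathcomp Require Import lra.
Import Order.TTheory GRing.Theory Num.Theory.
Import numFieldNormedType.Exports.
Local Open Scope classical_set_scope.
Local Open Scope ring_scope.
Set Implicit Arguments. Unset Strict Implicit.

(* The map eps |-> R(K(w, eps)) is nondecreasing and bounded below by R(K_w),
   so its right limit at 0 is its infimum, and it suffices to show that every
   closed ball B(z, r) containing the image of K_w, once enlarged by any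
   delta > 0, contains the image of some K(w, eps).  If not, the sets
   K(w, eps) \ iota^-1 B(z, r + delta) form a nested family of nonempty
   subsets of the compact set K, so they have a common adherent point h in K.
   Since uniform convergence on Omega controls both the point evaluations at
   the x_j and (through ||g||_X <= C_X ||g||_C) the distance in X, h lies in
   K_w and iota h lies outside B(z, r + delta): a contradiction. *)

Lemma ler_add_scaled_gt0 (R : realFieldType) (c x y : R) : 0 <= c ->
  (forall e, 0 < e -> x <= y + c * e) -> x <= y.
Proof.
move=> c0 xy; apply/ler_addgt0Pr => e e0.
have c1 : 0 < c + 1 by lra.
apply: (le_trans (xy _ (divr_gt0 e0 c1))); rewrite lerD2l.
rewrite mulrCA ger_pMr // ler_pdivrMr // mul1r; lra.
Qed.

Section ChebyshevRadius.
Variables (R : realType) (X : normedModType R).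
Local Open Scope ereal_scope.

Lemma cheb_radius_ge0 (S : set X) : 0 <= cheb_radius S.
Proof. by apply: le_ereal_inf_tmp => _ [r [r0 _] <-]; rewrite lee_fin. Qed.

Lemma le_cheb_radius (S T : set X) : S `<=` T -> cheb_radius S <= cheb_radius T.
Proof.
move=> ST; apply: ereal_inf_le_tmp => _ [r [r0 [z Tz]] <-].
by exists r => //; split => //; exists z; apply: subset_trans Tz.
Qed.

Lemma cheb_radius_le_ball (S : set X) (z : X) (r : R) : (0 <= r)%R ->
  S `<=` [set y | (`|y - z| <= r)%R] -> cheb_radius S <= r%:E.
Proof. by move=> r0 Sz; apply: ereal_inf_lbound; exists r => //; split => //; exists z. Qed.

Lemma cheb_radius_lt (S : set X) (x : \bar R) : cheb_radius S < x ->
  exists r z, [/\ (0 <= r)%R, r%:E < x & S `<=` [set y | (`|y - z| <= r)%R]].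
Proof. by move=> /ereal_inf_lt [_ [r [r0 [z Sz]] <-] rx]; exists r, z. Qed.

Lemma cheb_radius_cvg (S : R -> set X) (S0 : set X) :
  (forall e1 e2 : R, (0 < e1 <= e2)%R -> S e1 `<=` S e2) ->
  (forall e : R, (0 < e)%R -> S0 `<=` S e) ->
  (forall z (r del : R), (0 < del)%R -> S0 `<=` [set y | (`|y - z| <= r)%R] ->
     exists2 e, (0 < e)%R & S e `<=` [set y | (`|y - z| <= r + del)%R]) ->
  cheb_radius (S e) @[e --> 0^'+] --> cheb_radius S0.
Proof.
move=> S_mono S0S S_ball.
suff -> : cheb_radius S0 = ereal_inf [set cheb_radius (S e) | e in [set` `]0%R, +oo[]].
  apply: nondecreasing_at_right_cvge => // e1 e2; rewrite !in_itv /= !andbT.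
  by move=> e10 _ e12; apply/le_cheb_radius/S_mono; rewrite e10.
apply/eqP; rewrite eq_le; apply/andP; split.
  apply: le_ereal_inf_tmp => _ [e + <-]; rewrite /= in_itv /= andbT => e0.
  exact/le_cheb_radius/S0S.
apply/lee_addgt0Pr => del del0.
have := cheb_radius_ge0 S0.
case S0c: (cheb_radius S0) => [c| |] // _; last by rewrite leey.
have /cheb_radius_lt [r [z [r0 rc S0z]]] : cheb_radius S0 < (c + del / 2)%:E.
  by rewrite S0c lte_fin; lra.
have del2 : (0 < del / 2)%R by lra.
have [e e0 Sez] := S_ball z r _ del2 S0z.
have inf_le : ereal_inf [set cheb_radius (S e) | e in [set` `]0%R, +oo[]]
    <= cheb_radius (S e).
  by apply: ereal_inf_lbound; exists e => //=; rewrite in_itv /= andbT.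
apply: (le_trans inf_le).
have rdel0 : (0 <= r + del / 2)%R by lra.
apply: le_trans (cheb_radius_le_ball rdel0 Sez) _.
by rewrite -EFinD lee_fin; move: rc; rewrite lte_fin; lra.
Qed.

End ChebyshevRadius.

Lemma compact_nested_closure (R : realDomainType) (T : topologicalType)
    (K : set T) (A : R -> set T) :
  compact K -> (forall e, 0 < e -> A e `<=` K) ->
  (forall e1 e2, 0 < e1 <= e2 -> A e1 `<=` A e2) ->
  (forall e, 0 < e -> A e !=set0) ->
  exists2 h, K h & forall e, 0 < e -> closure (A e) h.
Proof.
move=> cK AK A_mono A_n0.
pose F := filter_from [set e : R | 0 < e] A.
have FF : ProperFilter F.
  apply: filter_from_proper; last by move=> e /A_n0.
  apply: filter_from_filter; first by exists 1; rewrite /= ltr01.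
  move=> e1 e2 e10 e20; exists (Order.min e1 e2); first by rewrite /= lt_min e10.
  by move=> h Ah; split; apply: A_mono Ah; rewrite lt_min e10 e20 /= ge_min lexx ?orbT.
have [h [Kh Fh]] := cK F FF (ex_intro2 _ _ 1 ltr01 (AK 1 ltr01)).
by exists h => // e e0 B hB; apply: Fh => //; exists e.
Qed.

Lemma uniform_closure_approx (T : choiceType) (R : realType) (Om : set T)
    (A : set {uniform` Om -> R}) (h : {uniform` Om -> R}) (e : R) :
  0 < e -> closure A h -> exists2 g, A g & forall y, Om y -> `|h y - g y| <= e.
Proof.
move=> e0 /(_ [set g | forall y, Om y -> ball (h y) e (g y)]) [].
  apply/uniform_nbhs; exists [set xy | ball xy.1 e xy.2]; split => //.
  exact: (entourage_ball _ (PosNum e0)).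
by move=> g [Ag hg]; exists g => // y /hg; rewrite /ball /= => /ltW.
Qed.

Lemma normr_le_mnorm (R : realType) (m : nat) (v : 'I_m -> R) (j : 'I_m) :
  `|v j| <= Num.sqrt m%:R * mnorm v.
Proof.
have m0 : (0 < m)%N by exact: leq_ltn_trans (leq0n _) (ltn_ord j).
rewrite /mnorm -sqrtrM ?ler0n // mulrA divff ?pnatr_eq0 -?lt0n // mul1r.
rewrite -[leLHS]sqrtr_sqr ler_wsqrtr // (bigD1 j) //= real_normK ?num_real //.
by rewrite lerDl; apply: sumr_ge0 => i _; exact: sqr_ge0.
Qed.

Lemma subset_Knbhd (R : realType) (d m : nat) (K : set ('rV[R]_d -> R))
    (xs : 'I_m -> 'rV[R]_d) (w : 'I_m -> R) (e1 e2 : R) :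
  e1 <= e2 -> Knbhd K xs w e1 `<=` Knbhd K xs w e2.
Proof. by move=> e12 h [w' /= w'w Kh]; exists w' => //=; apply: le_trans e12. Qed.

Lemma Kfib_sub_Knbhd (R : realType) (d m : nat) (K : set ('rV[R]_d -> R))
    (xs : 'I_m -> 'rV[R]_d) (w : 'I_m -> R) (e : R) :
  0 <= e -> Kfib K xs w `<=` Knbhd K xs w e.
Proof.
move=> e0 h Kh; exists w => //=.
rewrite /mnorm big1 ?mulr0 ?sqrtr0 // => j _.
by rewrite /= subrr normr0 expr0n.
Qed.

Lemma CO_lincomb (R : realType) (d : nat) (Om : set 'rV[R]_d) (a : R) f g :
  CO Om f -> CO Om g -> CO Om (a *: f + g).
Proof.
move=> [cf f0] [cg g0]; split => [x|x nOmx].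
  by apply: cvgD; [apply: cvgZ; [exact: cvg_cst | exact: cf] | exact: cg].
by rewrite !fctE f0 // g0 // scaler0 addr0.
Qed.

Lemma supnorm_le (R : realType) (d : nat) (Om : set 'rV[R]_d) g e : 0 <= e ->
  (forall x, Om x -> `|g x| <= e) -> 0 <= supnorm Om g <= e.
Proof.
move=> e0 ge; rewrite /supnorm.
have [[x0 Omx0]|Om0] := pselect (Om !=set0); last first.
  by move/nonemptyPn: Om0 => ->; rewrite image_set0 sup0 lexx.
have ub : ubound [set `|g x| | x in Om] e by move=> _ [x Omx <-]; exact: ge.
apply/andP; split; last by apply: ge_sup => //; exists `|g x0|, x0.
by apply: le_trans (normr_ge0 (g x0)) _; apply: ub_le_sup; [exists e | exists x0].
Qed.

Section Embedding.
Variables (R : realType) (d : nat) (Om : set 'rV[R]_d) (X : normedModType R).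
Variables (iota : ('rV[R]_d -> R) -> X) (CX : R).
Hypothesis iota_lin : forall (a : R) f g, CO Om f -> CO Om g ->
  iota (a *: f + g) = a *: iota f + iota g.
Hypothesis iota_bounded : forall g, CO Om g -> `|iota g| <= CX * supnorm Om g.

Lemma iota_dist_le f g (e : R) : CO Om f -> CO Om g -> 0 <= e ->
  (forall y, Om y -> `|f y - g y| <= e) -> `|iota f - iota g| <= `|CX| * e.
Proof.
move=> COf COg e0 fg.
have -> : iota f - iota g = iota ((-1) *: g + f).
  by rewrite iota_lin // scaleN1r addrC.
have /andP[s0 se] : 0 <= supnorm Om ((-1) *: g + f) <= e.
  apply: supnorm_le => // y Omy; rewrite !fctE scaleN1r addrC; exact: fg.
apply: le_trans (iota_bounded (CO_lincomb _ COg COf)) _.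
apply: le_trans (ler_wpM2r s0 (ler_norm CX)) _.
exact: ler_wpM2l.
Qed.

Variables (K : set ('rV[R]_d -> R)) (m : nat) (xs : 'I_m -> 'rV[R]_d) (w : 'I_m -> R).
Hypothesis K_CO : K `<=` CO Om.
Hypothesis K_compact : compact (K : set {uniform` Om -> R}).
Hypothesis xs_Om : forall j, Om (xs j).

Lemma Knbhd_sub_ball (z : X) (r del : R) : 0 < del ->
  (forall h, Kfib K xs w h -> `|iota h - z| <= r) ->
  exists2 e, 0 < e & forall h, Knbhd K xs w e h -> `|iota h - z| <= r + del.
Proof.
move=> del0 fib_z; apply: contrapT => no_e.
pose A e : set {uniform` Om -> R} :=
  Knbhd K xs w e `&` [set h | r + del < `|iota h - z|].
have [h Kh clh] : exists2 h, K h & forall e, 0 < e -> closure (A e) h.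
  apply: (compact_nested_closure K_compact).
  - by move=> e _ g [[w' _ []]].
  - by move=> e1 e2 /andP[_ e12] g [/(subset_Knbhd e12) ? ?].
  move=> e e0; apply: contrapT => A0; apply: no_e; exists e => // g g_e.
  by rewrite leNgt; apply/negP => far; apply: A0; exists g.
have approx e : 0 < e -> exists2 g, A e g & forall y, Om y -> `|h y - g y| <= e.
  by move=> e0; exact: uniform_closure_approx e0 (clh e e0).
have c_ge0 : 0 <= 1 + Num.sqrt (m%:R : R) by rewrite addr_ge0 ?sqrtr_ge0.
have lam_h : lam xs h = w.
  apply/funext => j; apply/eqP; rewrite -subr_eq0 -normr_le0.
  apply: (ler_add_scaled_gt0 c_ge0) => e /approx [g [[w' /= gw_e [_ lam_g]] _] hg].
  rewrite -lam_g in gw_e.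
  have gw := le_trans (normr_le_mnorm (lam xs g \- w) j)
    (ler_wpM2l (sqrtr_ge0 _) gw_e).
  have := ler_distD (g (xs j)) (h (xs j)) (w j).
  move: (hg _ (xs_Om j)) gw; rewrite /lam /=; lra.
have far_h : r + del <= `|iota h - z|.
  apply: (ler_add_scaled_gt0 (normr_ge0 CX)) => e e0.
  have [g [[w' _ [Kg _]] far_g] hg] := approx e e0.
  have gh : `|iota g - iota h| <= `|CX| * e.
    by apply: iota_dist_le (K_CO Kg) (K_CO Kh) (ltW e0) _ => y /hg; rewrite distrC.
  have := ler_distD (iota h) (iota g) z; move: far_g => /=; lra.
have := fib_z h (conj Kh lam_h); lra.
Qed.

End Embedding.

Unset Implicit Arguments.

Theorem lemma4p3 (R : realType) (d : nat) (Om : set 'rV[R]_d)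
  (X : completeNormedModType R) (iota : ('rV[R]_d -> R) -> X) (CX : R)
  (K : set ('rV[R]_d -> R)) (m : nat) (xs : 'I_m -> 'rV[R]_d) (w : 'I_m -> R) :
  closure_of_bounded_domain Om ->
  (* C(Omega) is a linear subspace of X via the embedding iota *)
  (forall (a : R) f g, CO Om f -> CO Om g -> iota (a *: f + g) = a *: iota f + iota g) ->
  {in CO Om &, injective iota} ->
  (forall g, CO Om g -> `|iota g| <= CX * supnorm Om g) ->
  K `<=` CO Om ->
  compact (K : set {uniform` Om -> R}) ->
  (0 < m)%N ->
  (forall j, Om (xs j)) ->
  (fun eps => cheb_radius (iota @` Knbhd K xs w eps)) @ 0^'+
    --> cheb_radius (iota @` Kfib K xs w).
Proof.
move=> _ iota_lin _ iota_bounded K_CO K_compact _ xs_Om.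
apply: (@cheb_radius_cvg R X (fun e => iota @` Knbhd K xs w e)).
- by move=> e1 e2 /andP[_ e12]; apply/image_subset/subset_Knbhd.
- by move=> e e0; apply/image_subset/Kfib_sub_Knbhd/ltW.
move=> z r del del0 fib_z.
have [e e0 Knbhd_z] := Knbhd_sub_ball iota_lin iota_bounded K_CO K_compact xs_Om
  del0 (fun h Kh => fib_z _ (imageP iota Kh)).
by exists e => // _ [h /Knbhd_z hz <-].
Qed.
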